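(* Let $\psi=13/10$, $\chi=1/2$, and $f(r)=\frac{\psi-r^{\chi}}{1+r}$ for $r\in(0,1]$. Parameterize $r$ by $t$ via $e^{t}=\frac{r}{1+r}$ (so $t\in(-\infty,\ln(1/2)]$). Then $f$, viewed as a function of $t$, i.e. $t\mapsto f\big(\frac{e^t}{1-e^t}\big)$, is concave on $(-\infty,\ln(1/2)]$. *)

From Stdlib Require Import Reals.
Open Scope R_scope.

Definition psi : R := 13/10.
Definition chi : R := 1/2.

Definition f (r : R) : R := (psi - Rpower r chi) / (1 + r).

Definition r_of_t (t : R) : R := exp t / (1 - exp t).

Definition g (t : R) : R := f (r_of_t t).

Definition concave_on (D : R -> Prop) (h : R -> R) : Prop :=
  forall x y l, D x -> D y -> 0 <= l <= 1 ->
    l * h x + (1 - l) * h y <= h (l * x + (1 - l) * y).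

(** With [E = e^t] we have [r = E / (1 - E)] and [1 + r = 1 / (1 - E)], so the function is
    [G(t) = psi (1 - E) - S] with [S = sqrt (E (1 - E))], and
    [G''(t) = - psi E - E^2 (4E^2 - 6E + 1) / (4 S^3)].
    On [E <= 1/2], [G'' <= 0] amounts to [- E (4E^2 - 6E + 1) <= 4 psi S^3]. This is trivial
    when the quadratic is nonnegative; otherwise square both sides: the quadratic then lies
    in [[-1, 0)] while [27 E (1 - E)^3 >= 1], and [16 psi^2 = 27.04 >= 27]. *)

From Stdlib Require Import Reals Lra Psatz.
From Coquelicot Require Import Coquelicot.
Open Scope R_scope.

Section ConcaveOfSecondDerivative.

Variable D : R -> Prop.
Hypothesis D_interval : forall x y z, D x -> D y -> x <= z <= y -> D z.

Lemma mean_value_on (F dF : R -> R) x y :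
  (forall t, D t -> is_derive F t (dF t)) -> D x -> D y -> x <= y ->
  exists c, x <= c <= y /\ F y - F x = dF c * (y - x).
Proof.
  intros F_derive Dx Dy le_xy.
  assert (D_between : forall t, x <= t <= y -> D t)
    by (intros t Ht; exact (D_interval x y t Dx Dy Ht)).
  destruct (MVT_gen F x y dF) as [c [Hc eq_F]];
    rewrite ?Rmin_left, ?Rmax_right in * by lra.
  - intros t Ht; apply F_derive, D_between; lra.
  - intros t Ht; apply derivable_continuous_pt; exists (dF t).
    apply is_derive_Reals, F_derive, D_between; lra.
  - exists c; auto.
Qed.

Variables F F' F'' : R -> R.
Hypothesis F_derive : forall t, D t -> is_derive F t (F' t).
Hypothesis F'_derive : forall t, D t -> is_derive F' t (F'' t).
Hypothesis F''_nonpos : forall t, D t -> F'' t <= 0.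

Lemma derive_antitone_on x y : D x -> D y -> x <= y -> F' y <= F' x.
Proof.
  intros Dx Dy le_xy.
  destruct (mean_value_on F' F'' x y F'_derive Dx Dy le_xy) as [c [Hc eq_F']].
  assert (F'' c <= 0) by (apply F''_nonpos, (D_interval x y); tauto).
  nra.
Qed.

Lemma chord_le_on x y l : D x -> D y -> x <= y -> 0 <= l <= 1 ->
  l * F x + (1 - l) * F y <= F (l * x + (1 - l) * y).
Proof.
  intros Dx Dy le_xy Hl.
  set (z := l * x + (1 - l) * y).
  assert (Hz : x <= z <= y) by (unfold z; nra).
  assert (Dz : D z) by exact (D_interval x y z Dx Dy Hz).
  destruct (mean_value_on F F' x z F_derive Dx Dz (proj1 Hz)) as [c1 [Hc1 eq1]].
  destruct (mean_value_on F F' z y F_derive Dz Dy (proj2 Hz)) as [c2 [Hc2 eq2]].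
  assert (F' c2 <= F' c1).
  { apply derive_antitone_on; try lra; apply (D_interval x y); auto; lra. }
  replace (z - x) with ((1 - l) * (y - x)) in eq1 by (unfold z; ring).
  replace (y - z) with (l * (y - x)) in eq2 by (unfold z; ring).
  assert (0 <= l * (1 - l) * (y - x)) by (apply Rmult_le_pos; nra).
  nra.
Qed.

Lemma concave_on_of_derive2 : concave_on D F.
Proof.
  intros x y l Dx Dy Hl.
  destruct (Rle_lt_dec x y) as [le_xy | lt_yx].
  - exact (chord_le_on x y l Dx Dy le_xy Hl).
  - pose proof (chord_le_on y x (1 - l) Dy Dx (Rlt_le _ _ lt_yx) ltac:(lra)) as chord.
    replace ((1 - l) * y + (1 - (1 - l)) * x) with (l * x + (1 - l) * y) in chord by ring.
    lra.
Qed.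

Lemma concave_on_ext (G H : R -> R) :
  (forall t, D t -> G t = H t) -> concave_on D H -> concave_on D G.
Proof.
  intros eq_GH conc_H x y l Dx Dy Hl.
  assert (Dxy : D (l * x + (1 - l) * y)).
  { destruct (Rle_lt_dec x y).
    - apply (D_interval x y); auto; nra.
    - apply (D_interval y x); auto; nra. }
  rewrite !eq_GH; auto.
Qed.

End ConcaveOfSecondDerivative.

Definition bernoulli_sd (t : R) : R := sqrt (exp t * (1 - exp t)).

Definition g_closed (t : R) : R := psi * (1 - exp t) - bernoulli_sd t.

Definition g_closed' (t : R) : R :=
  - psi * exp t - exp t * (1 - 2 * exp t) / (2 * bernoulli_sd t).

Definition g_closed'' (t : R) : R :=
  - psi * exp t - exp t ^ 2 * (4 * exp t ^ 2 - 6 * exp t + 1) / (4 * bernoulli_sd t ^ 3).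

Lemma exp_lt_1 t : t < 0 -> exp t < 1.
Proof. intro t_neg; rewrite <- exp_0; apply exp_increasing; exact t_neg. Qed.

Lemma bernoulli_sd_pos t : t < 0 -> 0 < bernoulli_sd t.
Proof.
  intro t_neg; apply sqrt_lt_R0.
  pose proof (exp_pos t); pose proof (exp_lt_1 t t_neg); nra.
Qed.

Lemma bernoulli_sd_sqr t : t < 0 -> bernoulli_sd t ^ 2 = exp t * (1 - exp t).
Proof.
  intro t_neg; unfold bernoulli_sd; rewrite pow2_sqrt; [reflexivity |].
  pose proof (exp_pos t); pose proof (exp_lt_1 t t_neg); nra.
Qed.

Lemma g_eq_closed t : t < 0 -> g t = g_closed t.
Proof.
  intro t_neg.
  pose proof (exp_pos t) as E_pos; pose proof (exp_lt_1 t t_neg) as E_lt_1.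
  unfold g, f, r_of_t, chi, g_closed, bernoulli_sd.
  replace (1 / 2) with (/ 2) by field.
  assert (r_pos : 0 < exp t / (1 - exp t)) by (apply Rdiv_lt_0_compat; lra).
  rewrite Rpower_sqrt by exact r_pos.
  replace (exp t * (1 - exp t)) with (exp t / (1 - exp t) * (1 - exp t) ^ 2)
    by (field; lra).
  rewrite sqrt_mult, sqrt_pow2 by (lra || apply pow2_ge_0).
  field; lra.
Qed.

Lemma is_derive_g_closed t : t < 0 -> is_derive g_closed t (g_closed' t).
Proof.
  intro t_neg.
  pose proof (exp_pos t); pose proof (exp_lt_1 t t_neg).
  pose proof (bernoulli_sd_pos t t_neg) as S_pos.
  unfold g_closed, g_closed', bernoulli_sd, Rminus in *.
  auto_derive; [nra |].
  field; lra.
Qed.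

Lemma is_derive_g_closed' t : t < 0 -> is_derive g_closed' t (g_closed'' t).
Proof.
  intro t_neg.
  pose proof (exp_pos t); pose proof (exp_lt_1 t t_neg).
  pose proof (bernoulli_sd_pos t t_neg) as S_pos.
  pose proof (bernoulli_sd_sqr t t_neg) as S_sqr.
  unfold g_closed', g_closed'' in *.
  assert (curvature : exp t ^ 2 * (4 * exp t ^ 2 - 6 * exp t + 1)
    = 2 * exp t * (1 - 4 * exp t) * bernoulli_sd t ^ 2 - (exp t * (1 - 2 * exp t)) ^ 2)
    by (rewrite S_sqr; ring).
  (* [field] treats the square root as an atom, so [S^2 = E (1 - E)] is undone first. *)
  rewrite curvature.
  unfold bernoulli_sd, Rminus in *.
  auto_derive; [repeat split; nra |].
  field; lra.
Qed.

Lemma quadratic_sqr_le E : 0 < E <= 1/2 -> 4 * E ^ 2 - 6 * E + 1 < 0 ->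
  (4 * E ^ 2 - 6 * E + 1) ^ 2 <= 27 * E * (1 - E) ^ 3.
Proof. intros E_range q_neg; nra. Qed.

Lemma curvature_bound E S : 0 < E <= 1/2 -> 0 < S -> S ^ 2 = E * (1 - E) ->
  - E * (4 * E ^ 2 - 6 * E + 1) <= 4 * psi * S ^ 3.
Proof.
  intros E_range S_pos S_sqr.
  assert (S3_pos : 0 < S ^ 3) by (apply pow_lt; exact S_pos).
  destruct (Rlt_or_le (4 * E ^ 2 - 6 * E + 1) 0) as [q_neg | q_nonneg].
  - apply Rsqr_incr_0_var; [| unfold psi; lra].
    pose proof (quadratic_sqr_le E E_range q_neg).
    replace (4 * psi * S ^ 3)² with (16 * psi ^ 2 * (E * (1 - E)) ^ 3)
      by (unfold Rsqr; rewrite <- S_sqr; ring).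
    replace (- E * (4 * E ^ 2 - 6 * E + 1))² with (E ^ 2 * (4 * E ^ 2 - 6 * E + 1) ^ 2)
      by (unfold Rsqr; ring).
    unfold psi; nra.
  - unfold psi; nra.
Qed.

Lemma ln_half_neg : ln (1/2) < 0.
Proof. rewrite <- ln_1; apply ln_increasing; lra. Qed.

Lemma exp_le_half t : t <= ln (1/2) -> exp t <= 1/2.
Proof.
  intro t_le; rewrite <- (exp_ln (1/2)) by lra.
  destruct (Rle_lt_or_eq_dec _ _ t_le) as [t_lt | ->].
  - left; apply exp_increasing; exact t_lt.
  - right; reflexivity.
Qed.

Lemma g_closed''_nonpos t : t <= ln (1/2) -> g_closed'' t <= 0.
Proof.
  intro t_le.
  assert (t_neg : t < 0) by (pose proof ln_half_neg; lra).
  pose proof (curvature_bound (exp t) (bernoulli_sd t)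
    (conj (exp_pos t) (exp_le_half t t_le)) (bernoulli_sd_pos t t_neg)
    (bernoulli_sd_sqr t t_neg)) as bound.
  pose proof (exp_pos t) as E_pos.
  assert (S3_pos : 0 < bernoulli_sd t ^ 3) by (apply pow_lt, bernoulli_sd_pos, t_neg).
  unfold g_closed''.
  set (E := exp t) in *; set (S3 := bernoulli_sd t ^ 3) in *.
  replace (- psi * E - E ^ 2 * (4 * E ^ 2 - 6 * E + 1) / (4 * S3))
    with (- (E * (E * (4 * E ^ 2 - 6 * E + 1) + 4 * psi * S3) / (4 * S3))) by (field; lra).
  assert (0 <= E * (E * (4 * E ^ 2 - 6 * E + 1) + 4 * psi * S3) / (4 * S3))
    by (apply Rdiv_le_0_compat; nra).
  lra.
Qed.

Theorem lemma25 : concave_on (fun t => t <= ln (1/2)) g.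
Proof.
  pose proof ln_half_neg.
  assert (half_line : forall x y z, x <= ln (1/2) -> y <= ln (1/2) -> x <= z <= y ->
    z <= ln (1/2)) by (intros; lra).
  apply (concave_on_ext _ half_line g g_closed).
  { intros t t_le; apply g_eq_closed; lra. }
  apply (concave_on_of_derive2 _ half_line g_closed g_closed' g_closed'').
  - intros t t_le; apply is_derive_g_closed; lra.
  - intros t t_le; apply is_derive_g_closed'; lra.
  - exact g_closed''_nonpos.
Qed.
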